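(* Let $a\in\mathbb F^*$ and let $g,h\in\mathcal R$ satisfy $x^n-a=hg$, where $\deg(h)=k$. Let $g_0$ be the constant coefficient of $g$, let $c=\gamma(a,g)$, and set $\widehat g^{r}=\rho_r(\theta^n(g))$ and $\widehat h^{l}=\rho_l(\theta^{-n}(h))$. Then: (1) $M_a^\theta(\overline g)^{\mathsf T}=M_{c^{-1}}^\theta(\overline{g^\#})$, where $g^\#=a\,\widehat g^{r}x^k-c\,g_0\,(x^n-c^{-1})$; (2) $M_c^\theta(\overline{x^k})\,M_a^\theta(\overline g)=M^\theta_{\theta^k(c^{-1})}(\overline{a\widehat g^{r}})^{\mathsf T}$; (3) $M^\theta_{\theta^{k-n}(c^{-1})}(\overline{x^{n-k}})\,M^\theta_{a^{-1}}(\overline{\widehat h^{l}})=M^\theta_c(\overline{a^{-1}h})^{\mathsf T}$.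
   Context: $\mathbb F$ is a finite field, $\theta\in\mathrm{Aut}(\mathbb F)$, and $\mathcal R=\mathbb F[x;\theta]$ is the skew polynomial ring: its elements are $\sum_i f_ix^i$ with $f_i\in\mathbb F$ (coefficients written on the left), with the usual addition and multiplication determined by $xb=\theta(b)x$ for $b\in\mathbb F$ together with associativity and distributivity. Fix $n\in\mathbb N$. For $b\in\mathbb F^*$, $\mathcal S_b=\mathcal R/\mathcal R(x^n-b)$ is the quotient left $\mathcal R$-module; $\overline f$ denotes the coset of $f\in\mathcal R$, and in an expression $M^\theta_b(\overline f)$ the coset is always taken in $\mathcal S_b$. The map $\mathfrak p_b:\mathbb F^n\to\mathcal S_b$, $(c_0,\dots,c_{n-1})\mapsto\overline{\sum_{i=0}^{n-1}c_ix^i}$ is a left $\mathbb F$-linear isomorphism and $\mathfrak v_b=\mathfrak p_b^{-1}$. The $(\theta,b)$-circulant of $\overline f\in\mathcal S_b$ is the $n\times n$ matrix $M^\theta_b(\overline f)$ whose row with index $i$ ($i=0,\dots,n-1$) is $\mathfrak v_b(\overline{x^if})$. The automorphism $\theta$ (and its integer powers $\theta^m$) is extended to $\mathcal R$ coefficientwise: $\theta^m(\sum f_ix^i)=\sum\theta^m(f_i)x^i$. For a right divisor $g=\sum g_ix^i$ of $x^n-a$ (so $g_0\neq0$) one sets $\gamma(a,g)=a\,g_0^{-1}\theta^n(g_0)$. For nonzero $f=\sum_{i=0}^tf_ix^i$ with $f_t\ne0$ the left and right reciprocals are $\rho_l(f)=\sum_{i=0}^t\theta^i(f_{t-i})x^i$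 and $\rho_r(f)=\sum_{i=0}^t\theta^{i-t}(f_{t-i})x^i$. *)

From HB Require Import structures.
From mathcomp Require Import all_boot all_order all_algebra.
From Stdlib Require Import ClassicalEpsilon.
Set Implicit Arguments. Unset Strict Implicit. Unset Printing Implicit Defensive.
Import GRing.Theory.
Local Open Scope ring_scope.

(* Elements of R = F[x;theta] are represented by their (left) coefficient
   lists, i.e. by {poly F}; only the multiplication differs. theta is a ring
   endomorphism of the finite field F, hence an automorphism; its inverse is
   [finv theta] (fingraph). *)

Section Skew.
Variables (F : finFieldType) (theta : {rmorphism F -> F}).

Definition thetaz (m : int) (x : F) : F :=
  match m with
  | Posz k => iter k theta x
  | Negz k => iter k.+1 (finv theta) x
  end.

(* skew product: (sum f_i x^i)(sum g_j x^j) = sum f_i theta^i(g_j) x^(i+j) *)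
Definition smul (p q : {poly F}) : {poly F} :=
  \poly_(m < (size p + size q).-1) \sum_(i < m.+1) p`_i * iter i theta q`_(m - i).

Definition thetaP (m : int) (p : {poly F}) : {poly F} := map_poly (thetaz m) p.

(* f and g have the same coset in S_b = R / R(x^n - b) *)
Definition scong (n : nat) (b : F) (f g : {poly F}) : Prop :=
  exists q : {poly F}, f - g = smul q ('X^n - b%:P).

Definition pb (n : nat) (c : 'rV[F]_n) : {poly F} :=
  \sum_(i < n) c 0 i *: 'X^i.

Definition vb (n : nat) (b : F) (f : {poly F}) : 'rV[F]_n :=
  epsilon (inhabits (0 : 'rV[F]_n)) (fun c => scong n b f (pb c)).

Definition circ (n : nat) (b : F) (f : {poly F}) : 'M[F]_n :=
  \matrix_(i < n) vb n b (smul 'X^i f).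

Definition gamma (n : nat) (a : F) (g : {poly F}) : F :=
  a * (g`_0)^-1 * thetaz (n%:Z) g`_0.

Definition rho_l (f : {poly F}) : {poly F} :=
  \poly_(i < size f) iter i theta f`_((size f).-1 - i).
Definition rho_r (f : {poly F}) : {poly F} :=
  \poly_(i < size f) thetaz (i%:Z - ((size f).-1)%:Z) f`_((size f).-1 - i).

End Skew.

From HB Require Import structures.
From mathcomp Require Import all_boot all_order all_algebra.
From mathcomp Require Import zify ring.
From Stdlib Require Import ClassicalEpsilon.
Set Implicit Arguments. Unset Strict Implicit. Unset Printing Implicit Defensive.
Import GRing.Theory.
Local Open Scope ring_scope.

Ltac decide_ifs :=
  repeat match goal with
  | |- context [if ?b then _ else _] =>
    first [ rewrite (_ : b = true); [|by lia]
          | rewrite (_ : b = false); [|by apply/negbTE; lia] ]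
  end.

Section SkewPolynomials.
Variables (F : finFieldType) (theta : {rmorphism F -> F}).
Local Notation sm := (smul theta).

Definition iter_theta (e : nat) : F -> F := iter e theta.

Fact iter_theta_is_zmod_morphism e : zmod_morphism (iter_theta e).
Proof. by elim: e => //= e IH x y; rewrite /iter_theta /= -/(iter_theta e) IH rmorphB. Qed.

Fact iter_theta_is_monoid_morphism e : monoid_morphism (iter_theta e).
Proof.
elim: e => [|e [IH1 IH2]]; first by split.
by split => [|x y]; rewrite /iter_theta iterS -/(iter_theta e) ?IH1 ?IH2 ?rmorph1 ?rmorphM.
Qed.

HB.instance Definition _ e :=
  GRing.isZmodMorphism.Build F F (iter_theta e) (iter_theta_is_zmod_morphism e).
HB.instance Definition _ e :=
  GRing.isMonoidMorphism.Build F F (iter_theta e) (iter_theta_is_monoid_morphism e).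

                                                                              
                                                           
Definition thetan (e : nat) : {rmorphism F -> F} := iter_theta e.

Local Notation thetanV e := (iter e (finv theta)).

Lemma thetan_inj e : injective (thetan e).
Proof. exact: fmorph_inj. Qed.

Lemma thetanD e1 e2 x : thetan (e1 + e2) x = thetan e1 (thetan e2 x).
Proof. exact: iterD. Qed.

Lemma thetanK e x : thetan e (thetanV e x) = x.
Proof.
elim: e x => [|e IH] x //; change (iter e.+1 theta (finv theta (thetanV e x)) = x).
by rewrite iterSr f_finv; [exact: IH | exact: fmorph_inj].
Qed.

Lemma thetanVK e x : thetanV e (thetan e x) = x.
Proof. by apply: (@thetan_inj e); rewrite thetanK. Qed.

Lemma thetanV0 e : thetanV e 0 = 0.
Proof. by apply: (@thetan_inj e); rewrite thetanK rmorph0. Qed.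

Lemma thetan_thetanV e N x : (e <= N)%N -> thetan N (thetanV e x) = thetan (N - e) x.
Proof. by move=> le; rewrite -{1}(subnK le) thetanD thetanK. Qed.

Lemma thetanV_thetan e N x : (e <= N)%N -> thetanV e (thetan N x) = thetan (N - e) x.
Proof. by move=> le; rewrite -{1}(subnK le) addnC thetanD thetanVK. Qed.

Lemma thetazNn (e : nat) x : thetaz theta (- e%:Z) x = thetanV e x.
Proof. by case: e. Qed.

Lemma thetaz_subn (m e : nat) x :
  (m <= e)%N -> thetaz theta (m%:Z - e%:Z) x = thetanV (e - m) x.
Proof. by move=> le; rewrite -opprB subzn // thetazNn. Qed.

Lemma sum_delta (N i : nat) (G : nat -> F) :
  \sum_(l < N) (if l == i :> nat then G l else 0) = if (i < N)%N then G i else 0.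
Proof.
case: ifP => iN; last by rewrite big1 // => l _; case: eqP => // il; move: iN; rewrite -il ltn_ord.
rewrite (bigD1 (Ordinal iN)) //= eqxx big1 ?addr0 // => l /eqP li.
by case: eqP => // il; case: li; apply: val_inj.
Qed.

Lemma coef_smul p q m :
  (sm p q)`_m = \sum_(i < m.+1) p`_i * thetan i q`_(m - i).
Proof.
rewrite /smul coef_poly; case: ltnP => // le; apply/esym/big1 => i _.
have [lt|ge] := ltnP i (size p); last by rewrite nth_default // mul0r.
rewrite [q`_(m - i)]nth_default ?rmorph0 ?mulr0 //.
move: le lt; rewrite -subn1; move: (size p) (size q) (nat_of_ord i) => *; lia.
Qed.

Lemma coef_smul_rev p q m :
  (sm p q)`_m = \sum_(i < m.+1) p`_(m - i) * thetan (m - i) q`_i.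
Proof.
rewrite coef_smul (reindex_inj rev_ord_inj) /=; apply: eq_bigr => i _.
by rewrite subSS subKn // -ltnS.
Qed.

Lemma coef0_smul p q : (sm p q)`_0 = p`_0 * q`_0.
Proof. by rewrite coef_smul big_ord1. Qed.

Lemma smul0r q : sm 0 q = 0.
Proof. by apply/polyP => m; rewrite coef_smul coef0 big1 // => i _; rewrite coef0 mul0r. Qed.

Lemma smulr0 p : sm p 0 = 0.
Proof.
by apply/polyP => m; rewrite coef_smul coef0 big1 // => i _; rewrite coef0 rmorph0 mulr0.
Qed.

Lemma smulBl p1 p2 q : sm (p1 - p2) q = sm p1 q - sm p2 q.
Proof.
apply/polyP => m; rewrite coefB !coef_smul -sumrB.
by apply: eq_bigr => i _; rewrite coefB mulrBl.
Qed.

Lemma smulBr p q1 q2 : sm p (q1 - q2) = sm p q1 - sm p q2.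
Proof.
apply/polyP => m; rewrite coefB !coef_smul -sumrB.
by apply: eq_bigr => i _; rewrite coefB rmorphB mulrBr.
Qed.

Lemma smulA p q r : sm (sm p q) r = sm p (sm q r).
Proof.
apply/polyP => i; rewrite coef_smul_rev coef_smul.
pose c3 j k := p`_j * thetan j q`_(i - j - k)%N * thetan (i - k) r`_k.
transitivity (\sum_(k < i.+1) \sum_(j < i.+1 | (j <= i - k)%N) c3 j k).
  apply: eq_bigr => /= k _; rewrite coef_smul big_distrl /=.
  rewrite (big_ord_narrow_leq (leq_subr _ _)) /=.
  by apply: eq_bigr => j _; rewrite /c3 -subnDA addnC subnDA.
rewrite (exchange_big_dep predT) //=; apply: eq_bigr => j _.
transitivity (\sum_(k < i.+1 | (k <= i - j)%N) c3 j k).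
  by apply: eq_bigl => k; have := ltn_ord k; have := ltn_ord j; lia.
rewrite (big_ord_narrow_leq (leq_subr j i)) coef_smul_rev rmorph_sum big_distrr /=.
apply: eq_bigr => k _; rewrite /c3 /= rmorphM -thetanD mulrA.
by congr (_ * _ * thetan _ _); have := ltn_ord k; have := ltn_ord j; lia.
Qed.

Lemma smulCl x p : sm x%:P p = x *: p.
Proof.
apply/polyP => m; rewrite coef_smul big_ord_recl coefC eqxx subn0 coefZ big1 ?addr0 //.
by move=> i _; rewrite coefC mul0r.
Qed.

Lemma coef_smulCr p x m : (sm p x%:P)`_m = p`_m * thetan m x.
Proof.
rewrite coef_smul_rev big_ord_recl coefC eqxx subn0 big1 ?addr0 //.
by move=> i _; rewrite coefC rmorph0 mulr0.
Qed.

Lemma smulXnr p k : sm p 'X^k = p * 'X^k.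
Proof.
apply/polyP => m; rewrite coef_smul_rev coefMXn.
transitivity (\sum_(l < m.+1) (if l == k :> nat then p`_(m - l) else 0)).
  by apply: eq_bigr => l _; rewrite coefXn rmorph_nat; case: eqP; rewrite ?mulr1 ?mulr0.
by rewrite (sum_delta _ _ (fun l => p`_(m - l))) ltnS leqNgt; case: ltnP.
Qed.

Lemma coef_smulXnl k f m :
  (sm 'X^k f)`_m = if (k <= m)%N then thetan k f`_(m - k) else 0.
Proof.
rewrite coef_smul (eq_bigr (fun l : 'I_m.+1 =>
  if l == k :> nat then thetan l f`_(m - l) else 0)) => [|l _].
  by rewrite (sum_delta _ _ (fun l => thetan l f`_(m - l))) ltnS.
by rewrite coefXn; case: eqP; rewrite ?mul1r ?mul0r.
Qed.

Lemma coef_smul_XnsubC n b d m : (0 < n)%N ->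
  (sm d ('X^n - b%:P))`_m = (if (n <= m)%N then d`_(m - n) else 0) - d`_m * thetan m b.
Proof.
move=> n0; rewrite smulBr coefB smulXnr coefMXn coef_smulCr ltnNge.
by case: leqP.
Qed.

Lemma size_smul p q : p != 0 -> q != 0 -> size (sm p q) = (size p + size q).-1.
Proof.
move=> p0 q0; apply/anti_leq; rewrite size_poly /=.
set i := (size p).-1; set j := (size q).-1.
have sp : size p = i.+1 by rewrite prednK // lt0n size_poly_eq0.
have sq : size q = j.+1 by rewrite prednK // lt0n size_poly_eq0.
have lead : (sm p q)`_(i + j) = lead_coef p * thetan i (lead_coef q).
  rewrite coef_smul (bigD1 (@Ordinal (i + j).+1 i (leq_addr j i))) //= big1 ?addr0; last first.
    move=> l /eqP ne; have [lt|ge] := ltnP l (size p); last by rewrite nth_default ?mul0r.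
    rewrite [q`_ _]nth_default ?rmorph0 ?mulr0 //.
    have : nat_of_ord l != i by apply/eqP => e; apply: ne; apply: val_inj.
    by rewrite sq; move: lt; rewrite sp; move: (nat_of_ord l) => *; lia.
  by rewrite addKn.
have : (sm p q)`_(i + j) != 0.
  by rewrite lead mulf_neq0 ?lead_coef_eq0 // fmorph_eq0 lead_coef_eq0.
rewrite sp sq addSn /= addnS; apply: contraR; rewrite -ltnNge ltnS => ?.
by rewrite nth_default.
Qed.

Lemma coef_pb n (r : 'rV[F]_n) (j : 'I_n) : (pb r)`_j = r 0 j.
Proof.
rewrite /pb coef_sum (bigD1 j) //= coefZ coefXn eqxx mulr1 big1 ?addr0 // => i ne.
by rewrite coefZ coefXn (_ : _ == _ = false) ?mulr0 //; apply: contraNF ne => /eqP /val_inj ->.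
Qed.

Lemma size_pb n (r : 'rV[F]_n) : (size (pb r) <= n)%N.
Proof.
apply/leq_sizeP => m nm; rewrite /pb coef_sum big1 // => i _.
by rewrite coefZ coefXn gtn_eqF ?mulr0 // (leq_trans (ltn_ord i)).
Qed.

Lemma pb_modXnsubC n b (r1 r2 : 'rV[F]_n) d : (0 < n)%N ->
  pb r1 - pb r2 = sm d ('X^n - b%:P) -> d = 0.
Proof.
move=> n0 e; apply/eqP; apply: contraT => d0.
have : (size (pb r1 - pb r2)%R <= n)%N.
  by apply: leq_trans (size_polyD _ _) _; rewrite geq_max size_polyN !size_pb.
rewrite e size_smul ?size_XnsubC //; last by rewrite -size_poly_eq0 size_XnsubC.
by rewrite addnS /= leqNgt -{1}[n]add0n ltn_add2r lt0n size_poly_eq0 d0.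
Qed.

Lemma vb_eq n b f (r : 'rV[F]_n) : (0 < n)%N ->
  scong theta n b f (pb r) -> vb theta n b f = r.
Proof.
move=> n0 [q e]; rewrite /vb.
have := @epsilon_spec _ (inhabits 0) (fun r' => scong theta n b f (pb r'))
  (ex_intro _ r (ex_intro _ q e)).
set r' := epsilon _ _ => -[q' e'].
have E : pb r' - pb r = sm (q - q') ('X^n - b%:P) by rewrite smulBl -e -e'; ring.
have pe : pb r' = pb r by apply/eqP; rewrite -subr_eq0 E (pb_modXnsubC n0 E) smul0r.
by apply/rowP => j; rewrite -!coef_pb pe.
Qed.

Lemma circE n b (f : {poly F}) (i j : 'I_n) : (size f <= n.+1)%N ->
  circ theta n b f i j =
    (if (i <= j)%N then thetan i f`_(j - i) else 0) + thetan i f`_(n + j - i) * thetan j b.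
Proof.
move=> sf; have io := ltn_ord i; have n0 : (0 < n)%N := leq_ltn_trans (leq0n i) io.
pose r := \row_(j < n) ((if (i <= j)%N then thetan i f`_(j - i) else 0)
                 + thetan i f`_(n + j - i) * thetan j b).
rewrite mxE (@vb_eq _ _ _ r) ?mxE //.
exists (\poly_(l < n) thetan i f`_(n + l - i)).
apply/polyP => m; rewrite coefB coef_smulXnl coef_smul_XnsubC // !coef_poly.
have [mn|nm] := ltnP m n; first by rewrite (coef_pb r (Ordinal mn)) mxE /=; ring.
rewrite [(pb r)`_m]nth_default ?(leq_trans (size_pb r)) // ifT; last by lia.
rewrite subr0 mul0r subr0; case: ltnP => mn.
  by rewrite (_ : n + (m - n) - i = m - i)%N //; lia.
rewrite nth_default ?rmorph0 //; clear r; move: (size f) sf => x sx; lia.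
Qed.

Lemma circXnE n b k (i l : 'I_n) : (k <= n)%N ->
  circ theta n b 'X^k i l =
    (if l == (i + k)%N :> nat then 1 else 0) + (if (l + n == i + k)%N then thetan l b else 0).
Proof.
move=> kn; have io := ltn_ord i; rewrite circE ?size_polyXn // !coefXn !rmorph_nat.
rewrite (_ : (n + l - i == k)%N = (l + n == i + k)%N); last by apply/eqP/eqP; lia.
congr (_ + _); last by case: (l + n == i + k)%N; rewrite ?mul1r ?mul0r.
by case: leqP => il; case: (l - i =P k)%N => ?; case: (_ =P _) => ? //; lia.
Qed.

Lemma circXn_mulmx n b k (M : 'M[F]_n) (i j : 'I_n) : (k <= n)%N ->
  (circ theta n b 'X^k *m M) i j =
    \sum_(l < n | l == (i + k)%N :> nat) M l j
    + \sum_(l < n | (l + n == i + k)%N) thetan l b * M l j.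
Proof.
move=> kn; rewrite mxE !(big_mkcond (fun l : 'I_n => _ == _)) -big_split /=.
by apply: eq_bigr => l _; rewrite circXnE // mulrDl; do 2 case: ifP => _; rewrite ?mul1r ?mul0r.
Qed.

Lemma circXn_mulmx_lt n b k (M : 'M[F]_n) (i j l : 'I_n) : (k <= n)%N ->
  l = (i + k)%N :> nat -> (circ theta n b 'X^k *m M) i j = M l j.
Proof.
move=> kn li; rewrite circXn_mulmx // (big_pred1 l) => [|l'/=]; last by rewrite -li.
by rewrite big_pred0 ?addr0 // => l'; apply/eqP; have := ltn_ord l; lia.
Qed.

Lemma circXn_mulmx_ge n b k (M : 'M[F]_n) (i j l : 'I_n) : (k <= n)%N ->
  (l + n = i + k)%N -> (circ theta n b 'X^k *m M) i j = thetan l b * M l j.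
Proof.
move=> kn li; rewrite circXn_mulmx // big_pred0 => [|l'/=]; last first.
  by apply/eqP; have := ltn_ord l'; lia.
by rewrite add0r (big_pred1 l) // => l' /=; rewrite -li eqn_add2r.
Qed.

Section FactorXnsubC.
Variables (n : nat) (a : F) (u v : {poly F}).
Hypotheses (n_gt0 : (0 < n)%N) (a_neq0 : a != 0) (uv : 'X^n - a%:P = sm u v).

Lemma XnsubC_neq0 : 'X^n - a%:P != 0.
Proof. by rewrite -size_poly_eq0 size_XnsubC. Qed.

Lemma factor_XnsubC :
  [/\ u != 0, v != 0, u`_0 * v`_0 = - a & (size u + size v = n.+2)%N].
Proof.
have v0 : v != 0 by apply: contraNneq XnsubC_neq0 => v0; rewrite uv v0 smulr0.
have u0 : u != 0 by apply: contraNneq XnsubC_neq0 => u0; rewrite uv u0 smul0r.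
have := congr1 (fun p : {poly F} => p`_0) uv; rewrite /= coef0_smul coefB coefXn coefC eqxx.
rewrite eq_sym (negbTE (lt0n_neq0 n_gt0)) sub0r => e0; split => //.
have := size_smul u0 v0; rewrite -uv size_XnsubC //.
by rewrite -!size_poly_eq0 -!lt0n in u0 v0; move: u0 v0; move: (size u) (size v) => *; lia.
Qed.

Lemma factor_XnsubC_coef0 : v`_0 != 0.
Proof.
case: factor_XnsubC => _ _ e _; apply: contra_eq_neq e => ->.
by rewrite mulr0 eq_sym oppr_eq0.
Qed.

                                                                 
                                                                                   
                                                                            
                               
Lemma gamma_twist_XnsubC :
  (forall l, thetan n v`_l * thetan l a = gamma theta n a v * v`_l)
  /\ sm (map_poly (thetan n) v) u = 'X^n - (gamma theta n a v)%:P.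
Proof.
have [_ v0 _ _] := factor_XnsubC; have v00 := factor_XnsubC_coef0.
set q := map_poly (thetan n) v.
have qE m : q`_m = thetan n v`_m by rewrite coef_map.
have XnC : sm 'X^n v = sm q 'X^n.
  by apply/polyP => m; rewrite coef_smulXnl smulXnr coefMXn ltnNge qE; case: leqP.
set w := 'X^n - sm q u.
have qa : sm q a%:P = sm w v.
  by rewrite /w smulBl smulA -uv smulBr -XnC opprB addrC subrK.
have w1 : (size w <= 1)%N.
  have : (size (sm q a%:P) <= size v)%N.
    by apply/leq_sizeP => m hm; rewrite coef_smulCr qE nth_default ?rmorph0 ?mul0r.
  have [->|w0] := eqVneq w 0; first by rewrite size_poly0.
  rewrite qa size_smul //; rewrite -size_poly_eq0 -lt0n in v0.
  by move: v0; move: (size w) (size v) => *; lia.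
have wC : sm q a%:P = w`_0 *: v by rewrite qa -smulCl -(size1_polyC w1).
have wE : w`_0 = gamma theta n a v.
  apply: (mulIf v00); have := congr1 (fun p : {poly F} => p`_0) wC.
  rewrite /= coef_smulCr coefZ qE /gamma => <-.
  by rewrite [RHS]mulrAC divfK // mulrC.
split=> [l|]; last by rewrite -wE -(size1_polyC w1) /w opprB addrC subrK.
by have := congr1 (fun p : {poly F} => p`_l) wC; rewrite /= coef_smulCr coefZ qE wE.
Qed.

End FactorXnsubC.

Lemma thetaP_nat (N : nat) v : thetaP theta N v = map_poly (thetan N) v.
Proof. by []. Qed.

Lemma thetaP_Nnat (N : nat) v : thetaP theta (- N%:Z) v = map_poly (thetanV N) v.
Proof. by apply: eq_map_poly => x; rewrite thetazNn. Qed.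

Lemma coef_rho_r_map (v : {poly F}) (N m : nat) : v != 0 -> ((size v).-1 <= N)%N ->
  (rho_r theta (map_poly (thetan N) v))`_m =
    if (m <= (size v).-1)%N then thetan (N - ((size v).-1 - m)) v`_((size v).-1 - m) else 0.
Proof.
move=> v0 le; rewrite /rho_r size_map_poly_id0 ?fmorph_eq0 ?lead_coef_eq0 // coef_poly.
have sv : (0 < size v)%N by rewrite lt0n size_poly_eq0.
have -> : (m < size v)%N = (m <= (size v).-1)%N by case: (size v) sv.
case: ifP => // mv; rewrite coef_map /= thetaz_subn // thetanV_thetan //.
by move: le mv; move: (size v).-1 => *; lia.
Qed.

Lemma coef_rho_l_map (v : {poly F}) (N m : nat) : v != 0 ->
  (rho_l theta (map_poly (thetanV N) v))`_m =
    if (m <= (size v).-1)%N then thetan m (thetanV N v`_((size v).-1 - m)) else 0.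
Proof.
move=> v0; have lv : thetanV N (lead_coef v) != 0.
  apply: contra_neq v0 => lv; apply/eqP.
  by rewrite -lead_coef_eq0 -[lead_coef v](thetanK N) lv rmorph0.
rewrite /rho_l size_map_poly_id0 // coef_poly.
have sv : (0 < size v)%N by rewrite lt0n size_poly_eq0.
have -> : (m < size v)%N = (m <= (size v).-1)%N by case: (size v) sv.
by case: ifP => // _; rewrite coef_map_id0 // thetanV0.
Qed.

Section CirculantsOfFactors.
Variables (n : nat) (a : F) (g h : {poly F}) (k : nat).
Hypotheses (n_gt0 : (0 < n)%N) (a_neq0 : a != 0) (hg : 'X^n - a%:P = sm h g)
  (size_h_k : (size h).-1 = k).
Local Notation c := (gamma theta n a g).
Local Notation t := (n - k)%N.
Local Notation ghr := (rho_r theta (thetaP theta n g)).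
Local Notation hhl := (rho_l theta (thetaP theta (- n%:Z) h)).

Lemma size_factors : [/\ size h = k.+1, size g = t.+1 & (k <= n)%N].
Proof.
have [h0 g0 _ shg] := factor_XnsubC n_gt0 a_neq0 hg.
have sh : size h = k.+1 by rewrite -size_h_k prednK // lt0n size_poly_eq0.
rewrite -size_poly_eq0 -lt0n in g0.
by move: shg g0; rewrite sh; move: (size g) => sg shg g0; split; lia.
Qed.

Lemma g_coef_eq0 l : (t < l)%N -> g`_l = 0.
Proof. by case: size_factors => _ sg _ lt; rewrite nth_default // sg. Qed.

Lemma h_coef_eq0 l : (k < l)%N -> h`_l = 0.
Proof. by case: size_factors => sh _ _ lt; rewrite nth_default // sh. Qed.

Lemma gamma_neq0 : c != 0.
Proof.
have g00 := factor_XnsubC_coef0 n_gt0 a_neq0 hg.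
by rewrite /gamma !mulf_neq0 ?invr_eq0 // -[thetaz _ _ _]/(thetan n g`_0) fmorph_eq0.
Qed.

Lemma g_twist l : thetan n g`_l * thetan l a = c * g`_l.
Proof. by case: (gamma_twist_XnsubC n_gt0 a_neq0 hg). Qed.

Lemma h_twist l : thetan n h`_l * thetan l c = thetan n a * h`_l.
Proof.
have [_ hgc] := gamma_twist_XnsubC n_gt0 a_neq0 hg.
have [tw _] := gamma_twist_XnsubC n_gt0 gamma_neq0 (esym hgc).
have [_ _ hg0 _] := factor_XnsubC n_gt0 a_neq0 hg.
have g00 := factor_XnsubC_coef0 n_gt0 a_neq0 hg.
have h00 : h`_0 != 0 by apply: contra_neq a_neq0 => h00; rewrite -[a]opprK -hg0 h00 mul0r oppr0.
rewrite tw /gamma -[thetaz _ _ g`_0]/(thetan n _) -[thetaz _ _ h`_0]/(thetan n _).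
by rewrite -(opprK a) -hg0 rmorphN rmorphM; field; rewrite h00 g00.
Qed.

Lemma g_twist_shift j l : thetan (j + l) a * thetan (j + n) g`_l = thetan j c * thetan j g`_l.
Proof. by rewrite !thetanD -!rmorphM mulrC g_twist. Qed.

Lemma h_twist_shift b s m : (s + m = n)%N ->
  thetan (b + s) (thetanV n h`_m) = thetan (b + s) (a^-1 * h`_m) * thetan b c.
Proof.
move=> smn; rewrite !thetanD -rmorphM; congr (thetan b _).
have := h_twist m; move: (gamma theta n a g) => C tw.
apply: (@thetan_inj m); rewrite !rmorphM -!thetanD addnC smn thetanK.
by rewrite -mulrA tw mulrA fmorphV mulVf ?mul1r // fmorph_eq0.
Qed.

Lemma h_twist_shiftV b s m : (s + m = k)%N ->
  thetan b (thetanV t c^-1) * thetan (b + s) (thetanV n h`_m)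
  = thetan (b + s) (a^-1 * h`_m).
Proof.
have [_ _ kn] := size_factors; move=> smk.
rewrite [thetan (b + s) _]thetanD [thetan (b + s) (_ * _)]thetanD -rmorphM.
congr (thetan b _); apply: (@thetan_inj t).
rewrite rmorphM thetanK -!thetanD (h_twist_shift 0); last by lia.
by rewrite mulrCA (_ : thetan 0 c = c) // mulVf ?mulr1 ?gamma_neq0.
Qed.

Lemma coef_ghr m : ghr`_m = if (m <= t)%N then thetan (k + m) g`_(t - m) else 0.
Proof.
have [_ sg kn] := size_factors; have g0 : g != 0 by rewrite -size_poly_eq0 sg.
rewrite thetaP_nat coef_rho_r_map // sg //=; last exact: leq_subr.
by case: ifP => // mt; congr (thetan _ _); lia.
Qed.

Lemma coef_hhl m : hhl`_m = if (m <= k)%N then thetan m (thetanV n h`_(k - m)) else 0.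
Proof.
have [sh _ _] := size_factors; have h0 : h != 0 by rewrite -size_poly_eq0 sh.
by rewrite thetaP_Nnat coef_rho_l_map // sh.
Qed.

Lemma coef_ghrXk m : (ghr * 'X^k)`_m = if (m <= n)%N then thetan m g`_(n - m) else 0.
Proof.
have [_ _ kn] := size_factors; rewrite coefMXn coef_ghr.
case: ltnP => mk; last first.
  rewrite (subnKC mk) (_ : t - (m - k) = n - m)%N; last by lia.
  by rewrite (_ : (m - k <= t)%N = (m <= n)%N) //; lia.
by rewrite ifT ?g_coef_eq0 ?rmorph0 //; lia.
Qed.

Local Notation gsharp :=
  (sm (sm a%:P ghr) 'X^k - sm ((c * g`_0)%:P) ('X^n - (c^-1)%:P)).

Lemma coef_gsharp m :
  gsharp`_m = if (m < n)%N then a * thetan m g`_(n - m) + (if m == 0%N then g`_0 else 0) else 0.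
Proof.
have g00 := factor_XnsubC_coef0 n_gt0 a_neq0 hg; have c0 := gamma_neq0.
have cg : c * g`_0 = a * thetan n g`_0.
  by rewrite /gamma -[thetaz _ _ _]/(thetan n _) mulrAC divfK.
rewrite !smulCl smulXnr -scalerAl coefB !coefZ coef_ghrXk coefB coefXn coefC.
case: (ltngtP m n) => [mn|mn|->].
- case: (m =P 0)%N => _; last by rewrite subr0 mulr0 subr0 addr0.
  by rewrite sub0r mulrN opprK mulrAC divff ?mul1r.
- by rewrite gtn_eqF ?(leq_ltn_trans (leq0n n) mn) // mulr0 subrr mulr0 subrr.
- by rewrite gtn_eqF // subnn subr0 mulr1 cg subrr.
Qed.

Lemma tr_circ_factor : (circ theta n a g)^T = circ theta n c^-1 gsharp.
Proof.
have [_ sg kn] := size_factors.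
have sgs : (size gsharp <= n.+1)%N.
  by apply/leq_sizeP => m nm; rewrite coef_gsharp ifF //; lia.
have sgn : (size g <= n.+1)%N by rewrite sg; lia.
apply/matrixP => i j; rewrite mxE !circE // !coef_gsharp; clear sg sgs sgn.
have io := ltn_ord i; have jo := ltn_ord j.
have [ij|ij|ij] := ltngtP i j; decide_ifs.
- rewrite rmorph0 mul0r !addr0 add0r rmorphM -thetanD (subnKC (ltnW ij)).
  by rewrite (_ : n - (j - i) = n + i - j)%N 1?mulrC //; lia.
- rewrite [g`_(n + i - j)]g_coef_eq0 1?rmorph0 ?mul0r ?addr0 ?add0r; last by lia.
  rewrite rmorphM -thetanD (_ : n - (n + j - i) = i - j)%N; last by lia.
  rewrite (_ : i + (n + j - i) = j + n)%N; last by lia.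
  rewrite -[in thetan i a](subnKC (ltnW ij)) g_twist_shift fmorphV mulrAC divff ?mul1r //.
  by rewrite fmorph_eq0 gamma_neq0.
- by rewrite -ij subnn addnK subn0 rmorph0 mul0r addr0 rmorphD rmorphM addrC mulrC.
Qed.

Lemma circXk_mul_circ_factor :
  circ theta n c 'X^k *m circ theta n a g = (circ theta n (thetan k c^-1) (sm a%:P ghr))^T.
Proof.
have [_ sg kn] := size_factors.
have sf : (size (sm a%:P ghr) <= n.+1)%N.
  by apply/leq_sizeP => m nm; rewrite smulCl coefZ coef_ghr ifF ?mulr0 //; lia.
have sgn : (size g <= n.+1)%N by rewrite sg; lia.
apply/matrixP => i j; rewrite [RHS]mxE circE // smulCl !coefZ !coef_ghr.
have io := ltn_ord i; have jo := ltn_ord j; have c0 := gamma_neq0.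
have [ikn|nik] := ltnP (i + k) n.
- rewrite (@circXn_mulmx_lt _ _ _ _ _ _ (Ordinal ikn)) // circE //.
  change (nat_of_ord (Ordinal ikn)) with (i + k)%N; clear sf sg sgn.
  rewrite addrC; congr (_ + _).
  + case: (leqP j i) => ji; decide_ifs; last first.
      by rewrite [g`_(_ - _)]g_coef_eq0 ?rmorph0 ?mul0r //; lia.
    rewrite rmorphM -thetanD mulrC (_ : j + (k + (i - j)) = i + k)%N; last by lia.
    by rewrite (_ : t - (i - j) = n + j - (i + k))%N //; lia.
  + case: (leqP (i + k) j) => ikj; decide_ifs; last by rewrite mulr0 rmorph0 mul0r.
    rewrite rmorphM -thetanD (_ : t - (n + i - j) = j - (i + k))%N; last by lia.
    rewrite (_ : j + (k + (n + i - j)) = (i + k) + n)%N; last by lia.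
    rewrite -thetanD -[in thetan j a](subnKC ikj) g_twist_shift mulrAC -rmorphM divff //.
    by rewrite rmorph1 mul1r.
- have lo : (i + k - n < n)%N by lia.
  rewrite (@circXn_mulmx_ge _ _ _ _ _ _ (Ordinal lo)) ?subnK // circE //.
  change (nat_of_ord (Ordinal lo)) with (i + k - n)%N; clear sf sg sgn.
  rewrite [g`_(n + j - _)]g_coef_eq0 ?rmorph0 ?mul0r ?addr0; last by lia.
  rewrite (_ : (n + i - j <= t)%N = false) ?mulr0 ?rmorph0 ?mul0r ?addr0; last first.
    by apply/negbTE; lia.
  case: (leqP (i + k - n) j) => lj; last first.
    by case: leqP => _; decide_ifs; rewrite !(mulr0, rmorph0).
  case: (leqP j i) => ji; decide_ifs; last first.
    by rewrite [g`_(_ - _)]g_coef_eq0 ?rmorph0 ?mulr0 //; lia.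
  rewrite [RHS]rmorphM -[in RHS]thetanD (_ : t - (i - j) = j - (i + k - n))%N; last by lia.
  rewrite (_ : j + (k + (i - j)) = (i + k - n) + n)%N; last by lia.
  by rewrite -[in thetan j a](subnKC lj) g_twist_shift.
Qed.

Lemma circXt_mul_circ_factor :
  circ theta n (thetanV t c^-1) 'X^t *m circ theta n a^-1 hhl
  = (circ theta n c (sm (a^-1)%:P h))^T.
Proof.
have [sh _ kn] := size_factors.
have sf : (size (sm (a^-1)%:P h) <= n.+1)%N.
  by rewrite smulCl (leq_trans (size_scale_leq _ _)) // sh ltnS.
have shl : (size hhl <= n.+1)%N.
  by apply/leq_sizeP => m nm; rewrite coef_hhl ifF //; lia.
apply/matrixP => i j; rewrite [RHS]mxE circE // smulCl !coefZ.
have io := ltn_ord i; have jo := ltn_ord j.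
have [ik|ki] := ltnP i k.
- have lo : (i + t < n)%N by lia.
  rewrite (@circXn_mulmx_lt _ _ _ _ _ _ (Ordinal lo)) ?leq_subr // circE //.
  change (nat_of_ord (Ordinal lo)) with (i + t)%N; clear sf sh shl.
  rewrite !coef_hhl addrC; congr (_ + _).
  + case: (leqP j i) => ji; decide_ifs; last by rewrite rmorph0 mul0r.
    rewrite -thetanD (_ : i + t + (n + j - (i + t)) = j + n)%N; last by lia.
    rewrite thetanD thetan_thetanV // subnn rmorphM mulrC.
    by rewrite (_ : k - (n + j - (i + t)) = i - j)%N //; lia.
  + case: (leqP (i + t) j) => lj; decide_ifs; last first.
      by rewrite [h`_(_ - _)]h_coef_eq0 ?mulr0 ?rmorph0 ?mul0r //; lia.
    rewrite -thetanD subnKC // (_ : k - (j - (i + t)) = n + i - j)%N; last by lia.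
    by rewrite (_ : nat_of_ord j = i + (j - i))%N ?h_twist_shift //; lia.
- have lo : (i - k < n)%N by lia.
  rewrite (@circXn_mulmx_ge _ _ _ _ _ _ (Ordinal lo)) ?leq_subr //; last by rewrite /=; lia.
  rewrite circE //; change (nat_of_ord (Ordinal lo)) with (i - k)%N; clear sf sh shl.
  rewrite !coef_hhl [h`_(n + i - j)]h_coef_eq0 ?mulr0 ?rmorph0 ?mul0r ?addr0; last by lia.
  rewrite (_ : (n + j - (i - k) <= k)%N = false) ?rmorph0 ?mul0r ?addr0; last first.
    by apply/negbTE; lia.
  case: (leqP (i - k) j) => lj; last first.
    by decide_ifs; rewrite [h`_(_ - _)]h_coef_eq0 ?mulr0 ?rmorph0 //; lia.
  case: (leqP j i) => ji; decide_ifs; last by rewrite rmorph0 mulr0.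
  rewrite -thetanD subnKC // (_ : k - (j - (i - k)) = i - j)%N; last by lia.
  by rewrite (_ : nat_of_ord j = i - k + (k - (i - j)))%N ?h_twist_shiftV //; lia.
Qed.

End CirculantsOfFactors.
End SkewPolynomials.

Theorem theorem5p6 (F : finFieldType) (theta : {rmorphism F -> F}) (n : nat)
    (a : F) (g h : {poly F}) (k : nat) :
  a != 0 ->
  'X^n - a%:P = smul theta h g ->
  (size h).-1 = k ->
  let g0 := g`_0 in
  let c := gamma theta n a g in
  let ghr := rho_r theta (thetaP theta (n%:Z) g) in
  let hhl := rho_l theta (thetaP theta (- (n%:Z)) h) in
  let gsharp := smul theta (smul theta (a%:P) ghr) 'X^k
                - smul theta ((c * g0)%:P) ('X^n - (c^-1)%:P) in
  [/\ (circ theta n a g)^T = circ theta n c^-1 gsharp,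
      circ theta n c 'X^k *m circ theta n a g
        = (circ theta n (thetaz theta (k%:Z) c^-1) (smul theta (a%:P) ghr))^T
    & circ theta n (thetaz theta (k%:Z - n%:Z) c^-1) 'X^(n - k)
        *m circ theta n a^-1 hhl
        = (circ theta n c (smul theta (a^-1)%:P h))^T ].
Proof.
move=> a0 hg hk g0 c ghr hhl gsharp.
have [->|n_gt0] := posnP n; first by split; apply/matrixP => -[].
have [_ _ kn] := size_factors n_gt0 a0 hg hk.
split.
- exact: (tr_circ_factor n_gt0 a0 hg hk).
- exact: (circXk_mul_circ_factor n_gt0 a0 hg hk).
- by rewrite thetaz_subn //; exact: (circXt_mul_circ_factor n_gt0 a0 hg hk).
Qed.
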